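(* Let $\tau>0$ and $S\subset V$, and let $S'=\{i\in V:(e^{-\tau\Delta}\chi_S)_i\ge\frac12\}$ be the result of one MBO iteration started from $S$. Let $\rho$ be the spectral radius of $\Delta$. Then $S'=S$, i.e. the MBO iterates starting from $S$ are stationary, if either of the following holds: (i) $S\ne\emptyset$ and $$\tau<\tau_\rho(S):=\rho^{-1}\log\Big(1+\tfrac12\,d_-^{r/2}(\mathrm{vol}\,S)^{-1/2}\Big);$$ (ii) $\Delta\chi_S\ne0$ and $$\tau\le\tau_\kappa(S):=\frac1{2\max_{i\in V}|(\Delta\chi_S)_i|}.$$
   Context: $G=(V,E)$ is a finite undirected weighted graph with vertex set $V=\{1,\dots,n\}$. The weights satisfy $\omega_{ij}=\omega_{ji}\ge0$, with $\omega_{ij}>0$ iff $\{i,j\}\in E$, and $\omega_{ii}=0$. The degrees are $d_i=\sum_j\omega_{ij}>0$, and $d_-=\min_id_i$. A parameter $r\in[0,1]$ is fixed. $\mathcal V$ is the space of functions $V\to\mathbb R$ with $\langle u,v\rangle_{\mathcal V}=\sum_iu_iv_id_i^r$. For $S\subset V$, $\chi_S$ is the indicator of $S$ and $\mathrm{vol}\,S=\sum_{i\in S}d_i^r$. The graph Laplacian is $(\Delta u)_i=d_i^{-r}\sum_j\omega_{ij}(u_i-u_j)$, which is self-adjoint and positive semidefinite for $\langle\cdot,\cdot\rangle_{\mathcal V}$. $e^{-t\Delta}$ is the solution operator of $\dot u=-\Delta u$. *)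

From Stdlib Require Import Reals Lra List.
Import ListNotations.
Open Scope R_scope.

(* Vertices are 0, ..., n-1 (the paper's 1..n shifted).
   Weights w : nat -> nat -> R, functions on V are nat -> R (only i < n matter),
   subsets S of V are boolean predicates nat -> bool (only i < n matter). *)

Definition sumV (n : nat) (f : nat -> R) : R :=
  fold_right (fun i acc => f i + acc) 0 (seq 0 n).

Definition deg (n : nat) (w : nat -> nat -> R) (i : nat) : R :=
  sumV n (fun j => w i j).

(* d_- = min_i d_i  (V assumed nonempty when this matters) *)
Definition dmin (n : nat) (w : nat -> nat -> R) : R :=
  fold_right Rmin (deg n w 0) (map (deg n w) (seq 0 n)).

Definition chi (S : nat -> bool) (i : nat) : R := if S i then 1 else 0.

Definition vol (n : nat) (w : nat -> nat -> R) (r : R) (S : nat -> bool) : R :=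
  sumV n (fun i => if S i then Rpower (deg n w i) r else 0).

Definition Lap (n : nat) (w : nat -> nat -> R) (r : R) (u : nat -> R) (i : nat) : R :=
  Rpower (deg n w i) (- r) * sumV n (fun j => w i j * (u i - u j)).

Definition weighted_graph (n : nat) (w : nat -> nat -> R) : Prop :=
  (forall i j, (i < n)%nat -> (j < n)%nat -> w i j = w j i) /\
  (forall i j, (i < n)%nat -> (j < n)%nat -> 0 <= w i j) /\
  (forall i, (i < n)%nat -> w i i = 0) /\
  (forall i, (i < n)%nat -> 0 < deg n w i).

(* lam is an eigenvalue of Delta (Delta is self-adjoint for <.,.>_V, so all
   its eigenvalues are real) *)
Definition is_eigenvalue (n : nat) (w : nat -> nat -> R) (r : R) (lam : R) : Prop :=
  exists v : nat -> R, (exists i, (i < n)%nat /\ v i <> 0) /\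
    (forall i, (i < n)%nat -> Lap n w r v i = lam * v i).

Definition is_spectral_radius (n : nat) (w : nat -> nat -> R) (r : R) (rho : R) : Prop :=
  (exists lam, is_eigenvalue n w r lam /\ Rabs lam = rho) /\
  (forall lam, is_eigenvalue n w r lam -> Rabs lam <= rho).

(* u : R -> (V -> R) solves du/dt = - Delta u with u(0) = u0,
   i.e. u t = e^{-t Delta} u0 *)
Definition heat_solution (n : nat) (w : nat -> nat -> R) (r : R)
    (u0 : nat -> R) (u : R -> nat -> R) : Prop :=
  (forall i, (i < n)%nat -> u 0 i = u0 i) /\
  (forall t i, (i < n)%nat ->
     derivable_pt_lim (fun s => u s i) t (- Lap n w r (u t) i)).

Definition maxabs (n : nat) (f : nat -> R) : R :=
  fold_right Rmax 0 (map (fun i => Rabs (f i)) (seq 0 n)).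

Definition tau_rho (n : nat) (w : nat -> nat -> R) (r rho : R) (S : nat -> bool) : R :=
  / rho * ln (1 + / 2 * Rpower (dmin n w) (r / 2) * Rpower (vol n w r S) (- (1 / 2))).

Definition tau_kappa (n : nat) (w : nat -> nat -> R) (r : R) (S : nat -> bool) : R :=
  / (2 * maxabs n (Lap n w r (chi S))).

(* Write kappa(S) = max_i |(Delta chi_S)_i|.  The proof shows that the single
   condition kappa(S) tau <= 1/2 already makes S a fixed point of the MBO
   step, and that both hypotheses of the theorem imply it.

   1. Maximum principle: along the heat flow an upper bound on the initial
      datum persists (the energy sum_j d_j^r ((y_j - K)_+)^2 is nonincreasing
      by summation by parts).  Since Delta u solves the heat equation too,
      |Delta u(t)| <= kappa, so |u(t) - chi_S| <= kappa t.
   2. Hence u(tau) >= 1/2 on S and u(tau) <= 1/2 off S when kappa tau <= 1/2.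
      Equality off S is excluded: it would pin Delta u at -kappa on an edge-
      closed set of vertices for a time interval, while the d^r-weighted sum
      of a Laplacian over such a set vanishes.
   3. Case (ii) is kappa tau <= 1/2 by definition of tau_kappa.  For case (i),
      ||Delta f||_V <= rho ||f||_V (the norm of the self-adjoint Delta is
      attained by an eigenvalue of Delta^2, hence by +-rho at most), which
      gives kappa <= rho vol(S)^(1/2) d_-^(-r/2), and ln(1 + x) < x. *)

From Stdlib Require Import Reals Lra Lia List Classical ClassicalDescription.
From mathcomp Require all_boot all_order all_algebra Rstruct.
Open Scope R_scope.

Module MatrixAlternative.
Import all_boot all_order all_algebra Rstruct.
Import Order.TTheory GRing.Theory Num.Theory.

Lemma list_seq_iota a n : List.seq a n = iota a n.
Proof. by elim: n a => //= n IH a; rewrite IH. Qed.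

Lemma sumV_bigop n (f : nat -> R) : sumV n f = (\sum_(j < n) f j)%R.
Proof.
rewrite /sumV list_seq_iota -(big_mkord xpredT f) /index_iota subn0.
by elim: (iota 0 n) => [|x s IH]; rewrite ?big_nil // big_cons /= IH.
Qed.

Lemma kernel_or_inverse_bound n (a : nat -> nat -> R) :
  (exists v : nat -> R, (exists i, Peano.lt i n /\ v i <> 0) /\
     forall i, Peano.lt i n -> sumV n (fun j => a i j * v j) = 0)
  \/ exists K, forall (x : nat -> R) i, Peano.lt i n ->
       Rabs (x i) <= K * sumV n (fun j => Rabs (sumV n (fun k => a j k * x k))).
Proof.
Local Open Scope ring_scope.
pose A : 'M[R]_n := \matrix_(i < n, j < n) a i j.
have [/det0P [v v0 vA]|detA] := boolP (\det A^T == 0).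
  left; exists (fun j => if insub j is Some k then v ord0 k else 0); split.
    have [j vj] : exists j, v ord0 j != 0.
      apply/existsP; apply: contraNT v0 => /existsPn v0.
      by apply/eqP/rowP => j; rewrite mxE; apply/eqP/negbNE/v0.
    by exists (nat_of_ord j); split; [apply/ssrnat.ltP|rewrite (valK j); apply/eqP].
  move=> i /ssrnat.ltP lt_in; rewrite sumV_bigop.
  transitivity ((v *m A^T) ord0 (Ordinal lt_in)); last by rewrite vA mxE.
  by rewrite mxE; apply: eq_bigr => j _; rewrite !mxE mulrC (valK j).
right; have unitA : A \in unitmx by rewrite -unitmx_tr unitmxE unitfE.
pose B := invmx A.
exists (\sum_(i < n) \sum_(j < n) `|B i j|) => x i /ssrnat.ltP lt_in.
pose I := Ordinal lt_in.
have x_inv : x i = \sum_(j < n) B I j * sumV n (fun k => a j k * x k).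
  under eq_bigr do rewrite sumV_bigop mulr_sumr.
  rewrite exchange_big /= (eq_bigr (fun k => (B *m A) I k * x k)); last first.
    by move=> k _; rewrite !mxE mulr_suml; apply: eq_bigr => j _; rewrite !mxE mulrA.
  rewrite mulVmx // (bigD1 I) //= big1 ?addr0 ?mxE ?eqxx ?mul1r //.
  by move=> k kI; rewrite mxE eq_sym (negbTE kI) mul0r.
have normE (y : R) : Rabs y = `|y| by [].
apply/RleP; rewrite x_inv sumV_bigop RmultE mulr_sumr normE.
apply: (@le_trans _ _ (\sum_(j < n) `|B I j * sumV n (fun k => a j k * x k)|)).
  exact: ler_norm_sum.
apply: ler_sum => j _.
rewrite normrM; apply: ler_wpM2r; first exact: normr_ge0.
rewrite (bigD1 I) //= (bigD1 j) //= -addrA lerDl.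
by apply: addr_ge0; apply: sumr_ge0 => k _; rewrite ?normr_ge0 //; apply: sumr_ge0.
Qed.
End MatrixAlternative.

Import MatrixAlternative.

Lemma fold_sum_init (f : nat -> R) l a :
  fold_right (fun i acc => f i + acc) a l = fold_right (fun i acc => f i + acc) 0 l + a.
Proof. induction l as [|x l IH]; simpl; [lra|]. rewrite IH; lra. Qed.

Lemma sumV_S n f : sumV (S n) f = sumV n f + f n.
Proof.
  unfold sumV. rewrite seq_S, fold_right_app. simpl. rewrite fold_sum_init. lra.
Qed.

Lemma sumV_ext n f g : (forall j, (j < n)%nat -> f j = g j) -> sumV n f = sumV n g.
Proof.
  induction n as [|n IH]; intros H; [reflexivity|].
  rewrite !sumV_S, IH, H; [reflexivity|lia|intros; apply H; lia].
Qed.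

Lemma sumV_plus n f g : sumV n (fun j => f j + g j) = sumV n f + sumV n g.
Proof. induction n as [|n IH]; [cbn; lra|]. rewrite !sumV_S, IH; lra. Qed.

Lemma sumV_minus n f g : sumV n (fun j => f j - g j) = sumV n f - sumV n g.
Proof. induction n as [|n IH]; [cbn; lra|]. rewrite !sumV_S, IH; lra. Qed.

Lemma sumV_scal n c f : sumV n (fun j => c * f j) = c * sumV n f.
Proof. induction n as [|n IH]; [cbn; lra|]. rewrite !sumV_S, IH; lra. Qed.

Lemma sumV_opp n f : sumV n (fun j => - f j) = - sumV n f.
Proof. induction n as [|n IH]; [cbn; lra|]. rewrite !sumV_S, IH; lra. Qed.

Lemma sumV_const n c : sumV n (fun _ => c) = INR n * c.
Proof. induction n as [|n IH]; [cbn; lra|]. rewrite sumV_S, IH, S_INR. ring. Qed.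

Lemma sumV_zero n : sumV n (fun _ => 0) = 0.
Proof. rewrite sumV_const. ring. Qed.

Lemma sumV_le n f g : (forall j, (j < n)%nat -> f j <= g j) -> sumV n f <= sumV n g.
Proof.
  induction n as [|n IH]; intros H; [cbn; lra|].
  rewrite !sumV_S. assert (f n <= g n) by (apply H; lia).
  assert (sumV n f <= sumV n g) by (apply IH; intros; apply H; lia). lra.
Qed.

Lemma sumV_nonneg n f : (forall j, (j < n)%nat -> 0 <= f j) -> 0 <= sumV n f.
Proof. intros H. rewrite <- (sumV_zero n). apply sumV_le. auto. Qed.

Lemma sumV_term n f i : (forall j, (j < n)%nat -> 0 <= f j) -> (i < n)%nat -> f i <= sumV n f.
Proof.
  induction n as [|n IH]; intros H Hi; [lia|].
  rewrite sumV_S. assert (0 <= sumV n f) by (apply sumV_nonneg; intros; apply H; lia).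
  assert (0 <= f n) by (apply H; lia).
  destruct (Nat.eq_dec i n) as [->|Hne]; [lra|].
  assert (f i <= sumV n f) by (apply IH; [intros; apply H; lia | lia]). lra.
Qed.

Lemma sumV_zero_nonneg n f : (forall j, (j < n)%nat -> 0 <= f j) -> sumV n f = 0 ->
  forall i, (i < n)%nat -> f i = 0.
Proof. intros H Hs i Hi. pose proof (sumV_term n f i H Hi). pose proof (H i Hi). lra. Qed.

Lemma sumV_swap n m (F : nat -> nat -> R) :
  sumV n (fun j => sumV m (fun k => F j k)) = sumV m (fun k => sumV n (fun j => F j k)).
Proof.
  induction n as [|n IH]; [cbn; symmetry; apply sumV_zero|].
  rewrite sumV_S, IH, <- sumV_plus. apply sumV_ext. intros. rewrite sumV_S. reflexivity.
Qed.

Lemma sumV_delta n (f : nat -> R) i : (i < n)%nat ->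
  sumV n (fun j => (if Nat.eq_dec i j then 1 else 0) * f j) = f i.
Proof.
  induction n as [|n IH]; intros Hi; [lia|].
  rewrite sumV_S. destruct (Nat.eq_dec i n) as [->|Hne].
  - rewrite (sumV_ext n _ (fun _ => 0)), sumV_zero.
    + destruct (Nat.eq_dec n n); [lra|congruence].
    + intros j Hj. destruct (Nat.eq_dec n j); [lia|lra].
  - rewrite IH by lia. destruct (Nat.eq_dec i n); [congruence|lra].
Qed.

Lemma sumV_antisym n (F : nat -> nat -> R) :
  (forall j k, (j < n)%nat -> (k < n)%nat -> F j k = - F k j) ->
  sumV n (fun j => sumV n (fun k => F j k)) = 0.
Proof.
  intros H.
  assert (E : sumV n (fun j => sumV n (fun k => F j k)) =
              - sumV n (fun j => sumV n (fun k => F j k))).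
  { rewrite sumV_swap at 1. rewrite <- sumV_opp. apply sumV_ext. intros k Hk.
    rewrite <- sumV_opp. apply sumV_ext. intros j Hj. rewrite (H j k) by auto. lra. }
  lra.
Qed.

Lemma sumV_abs n f : Rabs (sumV n f) <= sumV n (fun j => Rabs (f j)).
Proof.
  induction n as [|n IH]; [cbn; rewrite Rabs_R0; lra|].
  rewrite !sumV_S. eapply Rle_trans; [apply Rabs_triang|]. lra.
Qed.

Lemma maxabs_ge n f i : (i < n)%nat -> Rabs (f i) <= maxabs n f.
Proof.
  unfold maxabs. intros Hi. assert (Hin : In i (seq 0 n)) by (apply in_seq; lia).
  induction (seq 0 n) as [|x l IH]; [contradiction|].
  simpl. destruct Hin as [->|Hin]; [apply Rmax_l|].
  eapply Rle_trans; [apply IH; auto|apply Rmax_r].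
Qed.

Lemma maxabs_nonneg n f : 0 <= maxabs n f.
Proof.
  unfold maxabs. induction (seq 0 n) as [|x l IH]; simpl; [lra|].
  eapply Rle_trans; [apply IH|apply Rmax_r].
Qed.

Lemma maxabs_le n f B : 0 <= B -> (forall i, (i < n)%nat -> Rabs (f i) <= B) -> maxabs n f <= B.
Proof.
  unfold maxabs. intros HB H.
  assert (H' : forall i, In i (seq 0 n) -> Rabs (f i) <= B)
    by (intros i Hi; apply H; apply in_seq in Hi; lia).
  clear H. induction (seq 0 n) as [|x l IH]; simpl; [lra|].
  apply Rmax_lub; [apply H'; left; auto|apply IH; intros; apply H'; right; auto].
Qed.

Lemma dmin_le n w i : (i < n)%nat -> dmin n w <= deg n w i.
Proof.
  unfold dmin. intros Hi. assert (Hin : In i (seq 0 n)) by (apply in_seq; lia).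
  induction (seq 0 n) as [|x l IH]; [contradiction|].
  simpl. destruct Hin as [->|Hin]; [apply Rmin_l|].
  eapply Rle_trans; [apply Rmin_r|apply IH; auto].
Qed.

Lemma dmin_pos n w : (0 < n)%nat -> (forall i, (i < n)%nat -> 0 < deg n w i) -> 0 < dmin n w.
Proof.
  unfold dmin. intros Hn H.
  assert (H0 : 0 < deg n w 0) by auto.
  assert (H' : forall i, In i (seq 0 n) -> 0 < deg n w i)
    by (intros i Hi; apply H; apply in_seq in Hi; lia).
  clear H. induction (seq 0 n) as [|x l IH]; simpl; [lra|].
  apply Rmin_glb_lt; [apply H'; left; auto|apply IH; intros; apply H'; right; auto].
Qed.

Lemma deriv_sumV n (F : nat -> R -> R) (l : nat -> R) t :
  (forall j, (j < n)%nat -> derivable_pt_lim (F j) t (l j)) ->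
  derivable_pt_lim (fun s => sumV n (fun j => F j s)) t (sumV n l).
Proof.
  induction n as [|n IH]; intros H; [apply derivable_pt_lim_const|].
  rewrite sumV_S.
  apply (derivable_pt_lim_ext (fun s => sumV n (fun j => F j s) + F n s)).
  - intros s. rewrite sumV_S. reflexivity.
  - apply derivable_pt_lim_plus; [apply IH; intros; apply H; lia|apply H; lia].
Qed.

Lemma deriv_linear c s : derivable_pt_lim (fun x => c * x) s c.
Proof.
  pose proof (derivable_pt_lim_scal id c s 1 (derivable_pt_lim_id s)) as H.
  rewrite Rmult_1_r in H. exact H.
Qed.

Lemma deriv_locally_constant (f : R -> R) a b c s l :
  a < s < b -> (forall x, a < x < b -> f x = c) -> derivable_pt_lim f s l -> l = 0.
Proof.
  intros Hs Hf Hd. apply (uniqueness_limite f s); [exact Hd|].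
  intros eps Heps. assert (Hd0 : 0 < Rmin (s - a) (b - s)) by (apply Rmin_glb_lt; lra).
  exists (mkposreal _ Hd0). intros h h0 hlt. simpl in hlt.
  pose proof (Rmin_l (s - a) (b - s)). pose proof (Rmin_r (s - a) (b - s)).
  apply Rabs_def2 in hlt. rewrite !Hf by lra.
  replace ((c - c) / h - 0) with 0 by (field; auto). rewrite Rabs_R0. lra.
Qed.

Definition pos_sq (x : R) := Rmax x 0 * Rmax x 0.

Lemma pos_sq_deriv x : derivable_pt_lim pos_sq x (2 * Rmax x 0).
Proof.
  intros eps Heps. exists (mkposreal _ Heps). intros h h0 hlt. simpl in hlt.
  assert (B : Rabs (pos_sq (x + h) - pos_sq x - 2 * Rmax x 0 * h) <= h * h).
  { unfold pos_sq, Rmax. apply Rabs_le.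
    destruct (Rle_dec (x + h) 0); destruct (Rle_dec x 0); split; nra. }
  replace ((pos_sq (x + h) - pos_sq x) / h - 2 * Rmax x 0)
    with ((pos_sq (x + h) - pos_sq x - 2 * Rmax x 0 * h) / h) by (field; auto).
  unfold Rdiv. rewrite Rabs_mult, Rabs_inv.
  assert (Hh : 0 < Rabs h) by (apply Rabs_pos_lt; auto).
  apply (Rmult_lt_reg_r (Rabs h)); auto.
  rewrite Rmult_assoc, Rinv_l by lra.
  assert (h * h = Rabs h * Rabs h) by (rewrite <- Rabs_mult, Rabs_right; nra).
  nra.
Qed.

Lemma pos_sq_nonneg x : 0 <= pos_sq x.
Proof. unfold pos_sq. nra. Qed.

Lemma pos_sq_zero x : pos_sq x = 0 <-> x <= 0.
Proof. unfold pos_sq, Rmax. destruct (Rle_dec x 0); split; intros; nra. Qed.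

Lemma pos_part_monotone a b : 0 <= (a - b) * (Rmax a 0 - Rmax b 0).
Proof.
  unfold Rmax. destruct (Rle_dec a 0); destruct (Rle_dec b 0).
  - lra.
  - replace ((a - b) * (0 - b)) with ((b - a) * b) by ring. apply Rmult_le_pos; lra.
  - replace ((a - b) * (a - 0)) with ((a - b) * a) by ring. apply Rmult_le_pos; lra.
  - replace ((a - b) * (a - b)) with ((a - b) ^ 2) by ring. apply pow2_ge_0.
Qed.

Lemma ln_1_plus_lt x : 0 < x -> ln (1 + x) < x.
Proof.
  intros Hx. rewrite <- (ln_exp x) at 2. apply ln_increasing; [lra|]. apply exp_ineq1. lra.
Qed.

Lemma abs_le_bounds x a : Rabs x <= a -> - a <= x <= a.
Proof. unfold Rabs. destruct (Rcase_abs x); lra. Qed.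

Lemma abs_le_of_sq x b : 0 <= b -> x * x <= b * b -> Rabs x <= b.
Proof.
  intros Hb H. assert (E : x * x = Rabs x * Rabs x)
    by (rewrite <- Rabs_mult; symmetry; apply Rabs_right; nra).
  pose proof (Rabs_pos x). nra.
Qed.

Section Graph.
Variable n : nat.
Variable w : nat -> nat -> R.
Variable r : R.
Hypothesis Hw : weighted_graph n w.

Definition dr j := Rpower (deg n w j) r.
Definition cr j := Rpower (deg n w j) (- r).

Lemma w_sym j k : (j < n)%nat -> (k < n)%nat -> w j k = w k j.
Proof. destruct Hw as [H _]. auto. Qed.
Lemma w_nonneg j k : (j < n)%nat -> (k < n)%nat -> 0 <= w j k.
Proof. destruct Hw as [_ [H _]]. auto. Qed.

Lemma dr_pos j : 0 < dr j.
Proof. apply exp_pos. Qed.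
Lemma cr_pos j : 0 < cr j.
Proof. apply exp_pos. Qed.
Lemma dr_cr j : (j < n)%nat -> dr j * cr j = 1.
Proof.
  intros Hj. unfold dr, cr. rewrite <- Rpower_plus, Rplus_opp_r.
  apply Rpower_O. destruct Hw as [_ [_ [_ H]]]. auto.
Qed.

Lemma Lap_dr f i : (i < n)%nat -> dr i * Lap n w r f i = sumV n (fun j => w i j * (f i - f j)).
Proof. intros Hi. unfold Lap. fold (cr i). rewrite <- Rmult_assoc, dr_cr by auto. ring. Qed.

Lemma Lap_ext f g i :
  (forall j, (j < n)%nat -> f j = g j) -> (i < n)%nat -> Lap n w r f i = Lap n w r g i.
Proof. intros H Hi. unfold Lap. f_equal. apply sumV_ext. intros j Hj. rewrite !H by auto. reflexivity. Qed.

Lemma Lap_lin a b f g i :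
  Lap n w r (fun j => a * f j + b * g j) i = a * Lap n w r f i + b * Lap n w r g i.
Proof.
  unfold Lap. rewrite (sumV_ext n _ (fun j => a * (w i j * (f i - f j)) + b * (w i j * (g i - g j)))).
  - rewrite sumV_plus, !sumV_scal. ring.
  - intros; ring.
Qed.

Lemma Lap_scal c f i : Lap n w r (fun j => c * f j) i = c * Lap n w r f i.
Proof.
  rewrite <- (Rplus_0_r (c * _)), <- (Rmult_0_l (Lap n w r f i)), <- Lap_lin.
  unfold Lap. f_equal. apply sumV_ext. intros; ring.
Qed.

Lemma Lap_opp f i : Lap n w r (fun j => - f j) i = - Lap n w r f i.
Proof.
  replace (- Lap n w r f i) with (-1 * Lap n w r f i) by ring. rewrite <- Lap_scal.
  unfold Lap. f_equal. apply sumV_ext. intros; ring.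
Qed.

Definition ip f g := sumV n (fun j => dr j * f j * g j).

Lemma ip_comm f g : ip f g = ip g f.
Proof. apply sumV_ext. intros; ring. Qed.

Lemma dirichlet_identity f g :
  2 * sumV n (fun j => sumV n (fun k => w j k * (f j - f k) * g j)) =
  sumV n (fun j => sumV n (fun k => w j k * (f j - f k) * (g j - g k))).
Proof.
  set (X := sumV n (fun j => sumV n (fun k => w j k * (f j - f k) * g j))).
  assert (HY : sumV n (fun j => sumV n (fun k => w j k * (f j - f k) * g k)) = - X).
  { rewrite sumV_swap. unfold X. rewrite <- sumV_opp. apply sumV_ext. intros k Hk.
    rewrite <- sumV_opp. apply sumV_ext. intros j Hj. rewrite w_sym by auto. ring. }
  rewrite (sumV_ext n _ (fun j => sumV n (fun k => w j k * (f j - f k) * g j) -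
                                   sumV n (fun k => w j k * (f j - f k) * g k))).
  - rewrite sumV_minus, HY. unfold X. ring.
  - intros j Hj. rewrite <- sumV_minus. apply sumV_ext. intros; ring.
Qed.

Lemma ip_Lap f g : ip (Lap n w r f) g = sumV n (fun j => sumV n (fun k => w j k * (f j - f k) * g j)).
Proof.
  unfold ip. apply sumV_ext. intros j Hj. rewrite Lap_dr by auto.
  rewrite Rmult_comm, <- sumV_scal. apply sumV_ext. intros; ring.
Qed.

Lemma Lap_self_adjoint f g : ip (Lap n w r f) g = ip (Lap n w r g) f.
Proof.
  rewrite !ip_Lap. apply (Rmult_eq_reg_l 2); [|lra]. rewrite !dirichlet_identity.
  apply sumV_ext. intros j Hj. apply sumV_ext. intros k Hk. ring.
Qed.

(* <Delta f, (f - K)_+>_V >= 0, the dissipation behind the maximum principle. *)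
Lemma Lap_pos_part_nonneg f K :
  0 <= ip (Lap n w r f) (fun j => Rmax (f j - K) 0).
Proof.
  rewrite ip_Lap. apply (Rmult_le_reg_l 2); [lra|]. rewrite Rmult_0_r, dirichlet_identity.
  apply sumV_nonneg. intros a Ha. apply sumV_nonneg. intros b Hb.
  rewrite Rmult_assoc. apply Rmult_le_pos; [apply w_nonneg; auto|].
  pose proof (pos_part_monotone (f a - K) (f b - K)) as H.
  replace (f a - K - (f b - K)) with (f a - f b) in H by ring. exact H.
Qed.

(* Maximum principle: an upper bound on the initial datum persists for all
   positive times along the heat flow.  The energy
   sum_j d_j^r ((y_j - K)_+)^2 starts at 0 and is nonincreasing. *)
Lemma max_principle (y : R -> nat -> R) K :
  (forall t j, (j < n)%nat -> derivable_pt_lim (fun s => y s j) t (- Lap n w r (y t) j)) ->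
  (forall j, (j < n)%nat -> y 0 j <= K) ->
  forall t j, 0 <= t -> (j < n)%nat -> y t j <= K.
Proof.
  intros Hd H0 t j Ht Hj.
  set (E := fun s => sumV n (fun j => dr j * pos_sq (y s j - K))).
  set (E' := fun s => - 2 * ip (Lap n w r (y s)) (fun j => Rmax (y s j - K) 0)).
  assert (DE : forall s, derivable_pt_lim E s (E' s)).
  { intros s. unfold E', ip. rewrite <- sumV_scal. unfold E.
    apply (deriv_sumV n (fun j s => dr j * pos_sq (y s j - K))). intros k Hk.
    replace (-2 * (dr k * Lap n w r (y s) k * Rmax (y s k - K) 0))
      with (dr k * (2 * Rmax (y s k - K) 0 * (- Lap n w r (y s) k - 0))) by ring.
    apply derivable_pt_lim_scal.
    apply (derivable_pt_lim_comp (fun s => y s k - K) pos_sq).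
    - apply derivable_pt_lim_minus; [auto|apply derivable_pt_lim_const].
    - apply pos_sq_deriv. }
  assert (E_nonneg : forall s, 0 <= E s).
  { intros s. apply sumV_nonneg. intros k _.
    apply Rmult_le_pos; [left; apply dr_pos|apply pos_sq_nonneg]. }
  assert (E0 : E 0 = 0).
  { unfold E. transitivity (sumV n (fun _ => 0)); [|apply sumV_zero].
    apply sumV_ext. intros k Hk.
    rewrite (proj2 (pos_sq_zero (y 0 k - K))) by (pose proof (H0 k Hk); lra). ring. }
  assert (Et : E t = 0).
  { destruct (Req_dec t 0) as [->|Htn]; [exact E0|].
    destruct (MVT_cor2 E E' 0 t) as [c [Hc _]]; [lra|intros; apply DE|].
    assert (E'c : E' c <= 0) by (unfold E'; pose proof (Lap_pos_part_nonneg (y c) K); lra).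
    pose proof (E_nonneg t). rewrite E0 in Hc. nra. }
  pose proof (sumV_zero_nonneg n _
    (fun k _ => Rmult_le_pos _ _ (Rlt_le _ _ (dr_pos k)) (pos_sq_nonneg (y t k - K))) Et j Hj) as Z.
  apply Rmult_integral in Z. destruct Z as [Z|Z].
  - pose proof (dr_pos j). lra.
  - apply pos_sq_zero in Z. lra.
Qed.

(* On a vertex set closed under edges the weighted sum of a Laplacian vanishes:
   the contributions of the edges inside the set cancel pairwise. *)
Lemma Lap_sum_closed_set (c : nat -> bool) f :
  (forall j k, (j < n)%nat -> (k < n)%nat -> c j = true -> w j k <> 0 -> c k = true) ->
  sumV n (fun j => if c j then dr j * Lap n w r f j else 0) = 0.
Proof.
  intros Hc.
  set (ind := fun j => if c j then 1 else 0).
  transitivity (sumV n (fun j => sumV n (fun k => ind j * ind k * (w j k * (f j - f k))))).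
  - apply sumV_ext. intros j Hj. unfold ind. destruct (c j) eqn:Cj.
    + rewrite Lap_dr by auto. apply sumV_ext. intros k Hk.
      destruct (Req_dec (w j k) 0) as [W|W]; [rewrite W; ring|].
      rewrite (Hc j k) by auto. ring.
    + rewrite (sumV_ext n _ (fun _ => 0)), sumV_zero by (intros; ring). reflexivity.
  - apply sumV_antisym. intros j k Hj Hk. rewrite (w_sym j k) by auto. ring.
Qed.

Lemma Lap_zero_at_min f j :
  (j < n)%nat -> (forall k, (k < n)%nat -> f j <= f k) -> Lap n w r f j = 0 ->
  forall k, (k < n)%nat -> w j k <> 0 -> f k = f j.
Proof.
  intros Hj Hmin HL k Hk Hwk.
  assert (Hs : sumV n (fun k' => w j k' * (f k' - f j)) = 0).
  { rewrite (sumV_ext n _ (fun k' => - (w j k' * (f j - f k')))) by (intros; ring).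
    rewrite sumV_opp, <- Lap_dr, HL by auto. ring. }
  assert (Hnn : forall k', (k' < n)%nat -> 0 <= w j k' * (f k' - f j)).
  { intros k' Hk'. apply Rmult_le_pos; [apply w_nonneg; auto|]. pose proof (Hmin k' Hk'). lra. }
  pose proof (sumV_zero_nonneg n _ Hnn Hs k Hk) as Z.
  apply Rmult_integral in Z. destruct Z; [contradiction|lra].
Qed.

(* kappa(S) = max_i |(Delta chi_S)_i|, the initial speed of the heat flow from S. *)
Definition kappa S := maxabs n (Lap n w r (chi S)).

Section Heat.
Variable S : nat -> bool.
Variable u : R -> nat -> R.
Hypothesis Hu : heat_solution n w r (chi S) u.

Lemma u_deriv t j : (j < n)%nat -> derivable_pt_lim (fun s => u s j) t (- Lap n w r (u t) j).
Proof. destruct Hu as [_ H]. auto. Qed.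

Lemma Lap_u_deriv t j : (j < n)%nat ->
  derivable_pt_lim (fun s => Lap n w r (u s) j) t (- Lap n w r (fun k => Lap n w r (u t) k) j).
Proof.
  intros Hj. rewrite <- Lap_opp. unfold Lap at 1 2.
  apply derivable_pt_lim_scal.
  apply (deriv_sumV n (fun k s => w j k * (u s j - u s k))). intros k Hk.
  apply derivable_pt_lim_scal. apply derivable_pt_lim_minus; apply u_deriv; auto.
Qed.

Lemma Lap_u_initial j : (j < n)%nat -> Lap n w r (u 0) j = Lap n w r (chi S) j.
Proof. intros Hj. apply Lap_ext; auto. destruct Hu as [H _]. exact H. Qed.

(* By the maximum principle applied to +-Delta u, the speed of the flow never
   exceeds its initial maximum kappa. *)
Lemma Lap_u_bound t j : 0 <= t -> (j < n)%nat -> Rabs (Lap n w r (u t) j) <= kappa S.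
Proof.
  intros Ht Hj.
  assert (Init : forall k, (k < n)%nat -> - kappa S <= Lap n w r (u 0) k <= kappa S).
  { intros k Hk. rewrite Lap_u_initial by auto. apply abs_le_bounds, maxabs_ge; auto. }
  apply Rabs_le. split.
  - assert (- Lap n w r (u t) j <= kappa S); [|lra].
    apply (max_principle (fun s k => - Lap n w r (u s) k) (kappa S)); auto.
    + intros t' k Hk. rewrite Lap_opp.
      apply derivable_pt_lim_opp. apply Lap_u_deriv; auto.
    + intros k Hk. pose proof (Init k Hk). lra.
  - apply (max_principle (fun s k => Lap n w r (u s) k) (kappa S)); auto.
    + intros; apply Lap_u_deriv; auto.
    + intros k Hk. pose proof (Init k Hk). lra.
Qed.

Lemma u_lipschitz a b i : 0 <= a <= b -> (i < n)%nat -> Rabs (u b i - u a i) <= kappa S * (b - a).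
Proof.
  intros Hab Hi. destruct (Req_dec a b) as [->|Hne].
  - rewrite Rminus_diag, Rabs_R0. lra.
  - destruct (MVT_cor2 (fun s => u s i) (fun s => - Lap n w r (u s) i) a b)
      as [c [Hc Hcab]]; [lra|intros c _; apply u_deriv; auto|].
    rewrite Hc, Rabs_mult, Rabs_Ropp, (Rabs_right (b - a)) by lra.
    apply Rmult_le_compat_r; [lra|]. apply Lap_u_bound; [lra|auto].
Qed.

Lemma u_near_initial t i : 0 <= t -> (i < n)%nat -> Rabs (u t i - chi S i) <= kappa S * t.
Proof.
  intros Ht Hi. destruct Hu as [H0 _]. rewrite <- (H0 i Hi).
  replace (kappa S * t) with (kappa S * (t - 0)) by ring.
  apply u_lipschitz; [lra|auto].
Qed.

Lemma Lap_u_minimal_closed a b j k :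
  0 <= a -> (j < n)%nat -> (k < n)%nat -> w j k <> 0 ->
  (forall s, a < s < b -> Lap n w r (u s) j = - kappa S) ->
  (forall s, a < s < b -> Lap n w r (u s) k = - kappa S).
Proof.
  intros Ha Hj Hk Hwk Cj s Hs.
  assert (Z : - Lap n w r (fun k' => Lap n w r (u s) k') j = 0).
  { apply (deriv_locally_constant (fun x => Lap n w r (u x) j) a b (- kappa S) s); auto.
    apply Lap_u_deriv; auto. }
  rewrite <- (Cj s Hs). apply (Lap_zero_at_min (fun k' => Lap n w r (u s) k')); auto; [|lra].
  intros k' Hk'. rewrite (Cj s Hs).
  pose proof (abs_le_bounds _ _ (Lap_u_bound s k' ltac:(lra) Hk')). lra.
Qed.

(* Conservation on components forbids Delta u from sitting at its minimum
   -kappa < 0 at some vertex during a whole time interval: on the closed set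
   of such vertices the weighted sum of Delta u would be both 0 and < 0. *)
Lemma Lap_u_not_minimal a b i :
  0 < kappa S -> 0 <= a < b -> (i < n)%nat ->
  ~ (forall s, a < s < b -> Lap n w r (u s) i = - kappa S).
Proof.
  intros Hkappa Hab Hi Ci.
  set (minimal := fun j => if excluded_middle_informative
                          (forall s, a < s < b -> Lap n w r (u s) j = - kappa S) then true else false).
  assert (minimal_spec : forall j, minimal j = true <->
                          (forall s, a < s < b -> Lap n w r (u s) j = - kappa S)).
  { intros j. unfold minimal. destruct excluded_middle_informative; split; congruence || tauto. }
  set (s0 := (a + b) / 2).
  assert (Hs0 : a < s0 < b) by (unfold s0; lra).
  assert (closed : forall j k, (j < n)%nat -> (k < n)%nat -> minimal j = true ->
                   w j k <> 0 -> minimal k = true).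
  { intros j k Hj Hk Cj Hwk. apply minimal_spec.
    apply (Lap_u_minimal_closed a b j k); try lra; auto. apply minimal_spec; auto. }
  pose proof (Lap_sum_closed_set minimal (u s0) closed) as Zero.
  rewrite (sumV_ext n _ (fun j => - kappa S * (if minimal j then dr j else 0))), sumV_scal in Zero.
  - assert (Hterm : dr i <= sumV n (fun j => if minimal j then dr j else 0)).
    { replace (dr i) with (if minimal i then dr i else 0)
        by (destruct (minimal_spec i) as [_ H]; rewrite H; auto).
      apply (sumV_term n (fun j => if minimal j then dr j else 0)); auto.
      intros j _. destruct (minimal j); [left; apply dr_pos|lra]. }
    pose proof (dr_pos i). nra.
  - intros j Hj. destruct (minimal j) eqn:Mj; [|ring].
    rewrite (proj1 (minimal_spec j) Mj s0 Hs0). ring.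
Qed.

(* Reaching 1/2 would force u_i(s) = kappa S s, i.e.
   (Delta u)_i = -kappa S on (0, tau), which Lap_u_not_minimal excludes. *)
Lemma outside_stays_below tau i :
  0 < tau -> kappa S * tau <= 1 / 2 -> (i < n)%nat -> S i = false -> u tau i < 1 / 2.
Proof.
  intros Htau Hkt Hi HS.
  assert (U0 : u 0 i = 0).
  { destruct Hu as [H0 _]. rewrite H0 by auto. unfold chi. rewrite HS. reflexivity. }
  pose proof (abs_le_bounds _ _ (u_lipschitz 0 tau i ltac:(lra) Hi)) as Bt.
  destruct (Rle_lt_or_eq_dec 0 (kappa S) (maxabs_nonneg _ _)) as [Hk|Hk]; [|nra].
  apply Rnot_le_lt. intros Hhalf.
  assert (Ulin : forall s, 0 <= s <= tau -> u s i = kappa S * s).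
  { intros s Hs.
    pose proof (abs_le_bounds _ _ (u_lipschitz 0 s i ltac:(lra) Hi)) as B1.
    pose proof (abs_le_bounds _ _ (u_lipschitz s tau i ltac:(lra) Hi)) as B2. nra. }
  apply (Lap_u_not_minimal 0 tau i Hk ltac:(lra) Hi). intros s Hs.
  assert (E : - Lap n w r (u s) i - kappa S = 0).
  { apply (deriv_locally_constant (fun x => u x i - kappa S * x) 0 tau 0 s); auto.
    - intros x Hx. rewrite Ulin by lra. ring.
    - apply derivable_pt_lim_minus; [apply u_deriv; auto|apply deriv_linear]. }
  lra.
Qed.

Lemma mbo_stationary tau i :
  0 < tau -> kappa S * tau <= 1 / 2 -> (i < n)%nat -> (u tau i >= 1 / 2 <-> S i = true).
Proof.
  intros Htau Hkt Hi.
  pose proof (abs_le_bounds _ _ (u_near_initial tau i ltac:(lra) Hi)) as B.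
  unfold chi in B. split.
  - intros Hge. destruct (S i) eqn:E; auto.
    pose proof (outside_stays_below tau i Htau Hkt Hi E). lra.
  - intros E. rewrite E in B. lra.
Qed.

End Heat.

(* Let mu be the supremum of
   ||Delta f||^2 over unit vectors.  Self-adjointness makes mu - Delta^2
   arbitrarily small on near-maximisers, so it is not boundedly invertible;
   hence Delta^2 v = mu v for some v /= 0, and then +-sqrt mu is an eigenvalue
   of Delta, so sqrt mu <= rho. *)

Definition sqnorm f := ip f f.
Definition inv_dr_sum := sumV n (fun j => / dr j).

Lemma sqnorm_term f j : (j < n)%nat -> dr j * f j * f j <= sqnorm f.
Proof.
  intros Hj. apply (sumV_term n (fun j => dr j * f j * f j)); auto.
  intros k _. rewrite Rmult_assoc. apply Rmult_le_pos; [left; apply dr_pos|apply Rle_0_sqr].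
Qed.

Lemma sqnorm_nonneg f : 0 <= sqnorm f.
Proof.
  apply sumV_nonneg. intros j _.
  rewrite Rmult_assoc. apply Rmult_le_pos; [left; apply dr_pos|apply Rle_0_sqr].
Qed.

Lemma sqnorm_ext f g : (forall j, (j < n)%nat -> f j = g j) -> sqnorm f = sqnorm g.
Proof. intros H. apply sumV_ext. intros j Hj. rewrite H by auto. reflexivity. Qed.

Lemma sqnorm_scal c f : sqnorm (fun j => c * f j) = c * c * sqnorm f.
Proof. unfold sqnorm, ip. rewrite <- sumV_scal. apply sumV_ext. intros; ring. Qed.

Lemma sqnorm_sub a f g : sqnorm (fun j => a * f j - g j) = a * a * sqnorm f - 2 * a * ip f g + sqnorm g.
Proof.
  unfold sqnorm, ip. rewrite <- sumV_scal, <- (sumV_scal n (2 * a)), <- sumV_minus, <- sumV_plus.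
  apply sumV_ext. intros; ring.
Qed.

Lemma coord_sq_le f j : (j < n)%nat -> f j * f j <= inv_dr_sum * sqnorm f.
Proof.
  intros Hj. pose proof (sqnorm_term f j Hj). pose proof (dr_pos j). pose proof (sqnorm_nonneg f).
  assert (Z : / dr j <= inv_dr_sum).
  { apply (sumV_term n (fun j => / dr j)); auto. intros k _. left. apply Rinv_0_lt_compat, dr_pos. }
  replace (f j * f j) with (/ dr j * (dr j * f j * f j)) by (field; lra).
  apply Rle_trans with (/ dr j * sqnorm f).
  - apply Rmult_le_compat_l; [left; apply Rinv_0_lt_compat; lra|lra].
  - apply Rmult_le_compat_r; lra.
Qed.

Lemma coord_abs_le f j : (j < n)%nat -> Rabs (f j) <= sqrt (inv_dr_sum * sqnorm f).
Proof.
  intros Hj. rewrite <- sqrt_Rsqr_abs. apply sqrt_le_1_alt. apply coord_sq_le; auto.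
Qed.

Lemma sqnorm_zero f : sqnorm f = 0 -> forall j, (j < n)%nat -> f j = 0.
Proof.
  intros H j Hj. pose proof (coord_sq_le f j Hj). rewrite H, Rmult_0_r in H0. nra.
Qed.

Lemma Lap_sqnorm_bounded : exists M, forall f, sqnorm f = 1 -> sqnorm (Lap n w r f) <= M.
Proof.
  set (b := fun i => cr i * (2 * sqrt inv_dr_sum * deg n w i)).
  exists (sumV n (fun i => dr i * b i * b i)). intros f Hf.
  apply sumV_le. intros i Hi.
  assert (B : Rabs (Lap n w r f i) <= b i).
  { unfold Lap, b. fold (cr i). rewrite Rabs_mult, (Rabs_right (cr i)) by (left; apply cr_pos).
    apply Rmult_le_compat_l; [left; apply cr_pos|].
    eapply Rle_trans; [apply sumV_abs|]. unfold deg. rewrite <- sumV_scal. apply sumV_le.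
    intros j Hj. rewrite Rabs_mult, (Rabs_right (w i j)) by (apply Rle_ge, w_nonneg; auto).
    rewrite Rmult_comm. apply Rmult_le_compat_r; [apply w_nonneg; auto|].
    pose proof (coord_abs_le f i Hi). pose proof (coord_abs_le f j Hj). rewrite Hf, Rmult_1_r in *.
    unfold Rminus. eapply Rle_trans; [apply Rabs_triang|]. rewrite Rabs_Ropp. lra. }
  rewrite !Rmult_assoc. apply Rmult_le_compat_l; [left; apply dr_pos|].
  apply Rsqr_le_abs_1. rewrite (Rabs_right (b i)); auto.
  apply Rle_ge, Rle_trans with (Rabs (Lap n w r f i)); [apply Rabs_pos|exact B].
Qed.

Lemma Lap_norm_sup : (0 < n)%nat -> exists mu, 0 <= mu /\
  (forall f, sqnorm (Lap n w r f) <= mu * sqnorm f) /\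
  (forall eps, 0 < eps -> exists f, sqnorm f = 1 /\ mu - eps < sqnorm (Lap n w r f)).
Proof.
  intros Hn. destruct Lap_sqnorm_bounded as [M HM].
  set (E := fun x => exists f, sqnorm f = 1 /\ x = sqnorm (Lap n w r f)).
  set (e0 := fun j => (if Nat.eq_dec 0 j then 1 else 0) * / sqrt (dr 0)).
  assert (He0 : sqnorm e0 = 1).
  { unfold sqnorm, ip, e0. pose proof (dr_pos 0).
    rewrite (sumV_ext n _ (fun j => (if Nat.eq_dec 0 j then 1 else 0) *
                                    (dr j * / sqrt (dr 0) * / sqrt (dr 0)))).
    - rewrite sumV_delta by auto. rewrite Rmult_assoc, <- Rinv_mult, sqrt_sqrt by lra. field. lra.
    - intros j _. destruct (Nat.eq_dec 0 j); ring. }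
  destruct (completeness E) as [mu [Hub Hlub]].
  { exists M. intros x [f [Hf ->]]. apply HM; auto. }
  { exists (sqnorm (Lap n w r e0)), e0. auto. }
  exists mu. split; [|split].
  - apply Rle_trans with (sqnorm (Lap n w r e0)); [apply sqnorm_nonneg|]. apply Hub. exists e0; auto.
  - intros f. destruct (Req_dec (sqnorm f) 0) as [Z|Z].
    + rewrite Z, Rmult_0_r, (sqnorm_ext _ (fun _ => 0)).
      * unfold sqnorm, ip. rewrite (sumV_ext n _ (fun _ => 0)), sumV_zero by (intros; ring). lra.
      * intros j Hj. unfold Lap. rewrite (sumV_ext n _ (fun _ => 0)), sumV_zero; [ring|].
        intros k Hk. rewrite (sqnorm_zero f Z j), (sqnorm_zero f Z k) by auto. ring.
    + pose proof (sqnorm_nonneg f). set (c := / sqrt (sqnorm f)).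
      assert (Hc : c * c * sqnorm f = 1).
      { unfold c. rewrite <- Rinv_mult, sqrt_sqrt by lra. field. auto. }
      assert (Hl : c * c * sqnorm (Lap n w r f) <= mu).
      { rewrite <- sqnorm_scal, (sqnorm_ext _ (Lap n w r (fun j => c * f j))).
        - apply Hub. exists (fun j => c * f j). rewrite sqnorm_scal. auto.
        - intros j Hj. symmetry. apply Lap_scal. }
      assert (Hcc : 0 < c * c) by nra.
      apply (Rmult_le_reg_l (c * c)); auto.
      replace (c * c * (mu * sqnorm f)) with (mu * (c * c * sqnorm f)) by ring. rewrite Hc. lra.
  - intros eps Heps. apply NNPP. intros Hne.
    assert (mu <= mu - eps); [|lra].
    apply Hlub. intros x [f [Hf ->]]. apply Rnot_lt_le. intros Hlt. apply Hne. exists f; auto.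
Qed.

Definition kron (i j : nat) : R := if Nat.eq_dec i j then 1 else 0.
Definition lap_entry i j := cr i * (kron i j * deg n w i - w i j).
Definition lap2_entry i k := sumV n (fun j => lap_entry i j * lap_entry j k).

Lemma Lap_matrix f i : (i < n)%nat -> Lap n w r f i = sumV n (fun j => lap_entry i j * f j).
Proof.
  intros Hi. unfold lap_entry.
  rewrite (sumV_ext n _ (fun j => cr i * (kron i j * (deg n w i * f j)) - cr i * (w i j * f j)))
    by (intros; ring).
  rewrite sumV_minus, !sumV_scal. unfold kron. rewrite sumV_delta by auto.
  unfold Lap. fold (cr i).
  rewrite (sumV_ext n (fun j => w i j * (f i - f j)) (fun j => f i * w i j - w i j * f j))
    by (intros; ring).
  rewrite sumV_minus, sumV_scal. unfold deg.
  change (sumV n (w i)) with (sumV n (fun j => w i j)). ring.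
Qed.

Lemma Lap2_matrix f i : (i < n)%nat ->
  Lap n w r (Lap n w r f) i = sumV n (fun k => lap2_entry i k * f k).
Proof.
  intros Hi. rewrite Lap_matrix by auto.
  rewrite (sumV_ext n _ (fun j => sumV n (fun k => lap_entry i j * lap_entry j k * f k))).
  - rewrite sumV_swap. apply sumV_ext. intros k Hk. unfold lap2_entry.
    rewrite Rmult_comm, <- sumV_scal. apply sumV_ext. intros; ring.
  - intros j Hj. rewrite Lap_matrix, <- sumV_scal by auto. apply sumV_ext. intros; ring.
Qed.

Lemma kernel_or_coercive (a : nat -> nat -> R) :
  (exists v : nat -> R, (exists i, (i < n)%nat /\ v i <> 0) /\
     forall i, (i < n)%nat -> sumV n (fun k => a i k * v k) = 0)
  \/ exists C, forall f, sqnorm f <= C * sqnorm (fun i => sumV n (fun k => a i k * f k)).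
Proof.
  destruct (kernel_or_inverse_bound n a) as [Hker|[K HK]]; [left; exact Hker|right].
  set (Z := inv_dr_sum).
  exists (sumV n dr * (K * K * (INR n * INR n) * Z)). intros f.
  set (y := fun i => sumV n (fun k => a i k * f k)).
  assert (Hy : sumV n (fun j => Rabs (y j)) <= INR n * sqrt (Z * sqnorm y)).
  { rewrite <- sumV_const. apply sumV_le. intros j Hj. apply coord_abs_le; auto. }
  assert (Hs : 0 <= sumV n (fun j => Rabs (y j))) by (apply sumV_nonneg; intros; apply Rabs_pos).
  assert (HZ : 0 <= Z * sqnorm y).
  { apply Rmult_le_pos; [|apply sqnorm_nonneg].
    apply sumV_nonneg. intros; left; apply Rinv_0_lt_compat, dr_pos. }
  set (c := K * K * (INR n * INR n) * (Z * sqnorm y)).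
  apply Rle_trans with (sumV n (fun i => dr i * c)).
  2: { right. rewrite (sumV_ext n _ (fun i => c * dr i)), sumV_scal by (intros; ring).
       unfold c. ring. }
  apply sumV_le. intros i Hi.
  pose proof (HK f i Hi) as Bi. fold y in Bi. pose proof (Rabs_pos (f i)) as Pi.
  set (s := sumV n (fun j => Rabs (y j))) in *.
  assert (Fi : f i * f i <= (K * s) * (K * s)).
  { replace (f i * f i) with (Rabs (f i) * Rabs (f i))
      by (rewrite <- Rabs_mult; apply Rabs_right, Rle_ge, Rle_0_sqr).
    apply Rmult_le_compat; auto. }
  assert (Ss : s * s <= INR n * INR n * (Z * sqnorm y)).
  { rewrite <- (sqrt_sqrt (Z * sqnorm y)) by auto.
    replace (INR n * INR n * (sqrt (Z * sqnorm y) * sqrt (Z * sqnorm y)))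
      with ((INR n * sqrt (Z * sqnorm y)) * (INR n * sqrt (Z * sqnorm y))) by ring.
    apply Rmult_le_compat; auto. }
  assert (K * K * (s * s) <= c).
  { replace c with (K * K * (INR n * INR n * (Z * sqnorm y))) by (unfold c; ring).
    apply Rmult_le_compat_l; [apply Rle_0_sqr|exact Ss]. }
  rewrite Rmult_assoc. apply Rmult_le_compat_l; [left; apply dr_pos|]. nra.
Qed.

Lemma shifted_square_small mu f :
  0 <= mu -> (forall g, sqnorm (Lap n w r g) <= mu * sqnorm g) -> sqnorm f = 1 ->
  sqnorm (fun j => mu * f j - Lap n w r (Lap n w r f) j) <= mu * (mu - sqnorm (Lap n w r f)).
Proof.
  intros Hmu Hsup Hf. rewrite sqnorm_sub, Hf.
  rewrite ip_comm, (Lap_self_adjoint (Lap n w r f) f).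
  pose proof (Hsup (Lap n w r f)). unfold sqnorm in *. nra.
Qed.

(* If Delta^2 v = mu v with v /= 0, then sqrt mu or -sqrt mu is an eigenvalue
   of Delta: Delta v + sqrt mu v is an eigenvector for sqrt mu unless it
   vanishes, in which case v is one for -sqrt mu. *)
Lemma sq_eigenvalue_le_spectral_radius rho mu v :
  is_spectral_radius n w r rho -> 0 <= mu ->
  (exists i, (i < n)%nat /\ v i <> 0) ->
  (forall i, (i < n)%nat -> Lap n w r (Lap n w r v) i = mu * v i) ->
  sqrt mu <= rho.
Proof.
  intros [_ Hrho] Hmu Hv Hsq.
  set (s := sqrt mu). assert (ss : s * s = mu) by (apply sqrt_sqrt; auto).
  assert (s0 : 0 <= s) by apply sqrt_pos.
  set (v' := fun j => Lap n w r v j + s * v j).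
  destruct (classic (exists j, (j < n)%nat /\ v' j <> 0)) as [Hx|Hx].
  - assert (Ev : is_eigenvalue n w r s).
    { exists v'. split; auto. intros i Hi. unfold v' at 1.
      rewrite (Lap_ext _ (fun j => 1 * Lap n w r v j + s * v j) i); [|intros; ring|auto].
      rewrite Lap_lin, Hsq by auto. unfold v'. rewrite <- ss. ring. }
    apply Hrho in Ev. rewrite Rabs_right in Ev; lra.
  - assert (Ev : is_eigenvalue n w r (- s)).
    { exists v. split; auto. intros i Hi.
      assert (v' i = 0) by (apply NNPP; intros Hne; apply Hx; exists i; auto).
      unfold v' in H. lra. }
    apply Hrho in Ev. rewrite Rabs_Ropp, Rabs_right in Ev; lra.
Qed.

Lemma Lap_norm_le_spectral_radius rho : (0 < n)%nat -> is_spectral_radius n w r rho ->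
  forall f, sqnorm (Lap n w r f) <= rho * rho * sqnorm f.
Proof.
  intros Hn Hrho.
  destruct (Lap_norm_sup Hn) as [mu [Hmu [Hsup Happrox]]].
  assert (Hrho0 : 0 <= rho) by (destruct Hrho as [[lam [_ <-]] _]; apply Rabs_pos).
  assert (Hsqrt : sqrt mu <= rho).
  { set (a := fun i k => mu * kron i k - lap2_entry i k).
    assert (Ha : forall f i, (i < n)%nat ->
                 sumV n (fun k => a i k * f k) = mu * f i - Lap n w r (Lap n w r f) i).
    { intros f i Hi. unfold a. rewrite Lap2_matrix by auto.
      rewrite (sumV_ext n _ (fun k => mu * (kron i k * f k) - lap2_entry i k * f k)) by (intros; ring).
      rewrite sumV_minus, sumV_scal. unfold kron. rewrite sumV_delta by auto. reflexivity. }
    destruct (kernel_or_coercive a) as [[v [Hv Hker]]|[C HC]].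
    - apply (sq_eigenvalue_le_spectral_radius rho mu v); auto.
      intros i Hi. pose proof (Hker i Hi). rewrite Ha in H by auto. lra.
    - exfalso.
      set (eps := / (Rabs C * mu + 1)).
      assert (Heps : 0 < eps) by (apply Rinv_0_lt_compat; pose proof (Rabs_pos C); nra).
      destruct (Happrox eps Heps) as [f [Hf Hfl]].
      set (y := fun i => sumV n (fun k => a i k * f k)).
      assert (Hy : sqnorm y <= mu * eps).
      { rewrite (sqnorm_ext y (fun j => mu * f j - Lap n w r (Lap n w r f) j)) by (intros; apply Ha; auto).
        pose proof (shifted_square_small mu f Hmu Hsup Hf). nra. }
      assert (HCy : C * sqnorm y <= Rabs C * (mu * eps)).
      { pose proof (sqnorm_nonneg y). pose proof (Rle_abs C). pose proof (Rabs_pos C).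
        apply Rle_trans with (Rabs C * sqnorm y); [nra|]. apply Rmult_le_compat_l; auto. }
      assert (Hee : (Rabs C * mu) * eps < 1).
      { unfold eps. pose proof (Rabs_pos C).
        apply (Rmult_lt_reg_r (Rabs C * mu + 1)); [nra|].
        rewrite Rmult_assoc, Rinv_l by nra. nra. }
      pose proof (HC f). rewrite Hf in H. fold y in H. nra. }
  intros f. pose proof (Hsup f). pose proof (sqnorm_nonneg f).
  assert (mu <= rho * rho).
  { rewrite <- (sqrt_sqrt mu) by auto. apply Rmult_le_compat; auto; apply sqrt_pos. }
  nra.
Qed.

Lemma vol_sqnorm S : vol n w r S = sqnorm (chi S).
Proof. apply sumV_ext. intros j Hj. unfold chi, dr. destruct (S j); ring. Qed.

(* kappa(S) d_-^{r/2} <= rho vol(S)^{1/2}: sup norm versus ||.||_V, then the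
   spectral estimate applied to chi_S. *)
Lemma kappa_le_spectral S rho : 0 <= r -> (0 < n)%nat -> is_spectral_radius n w r rho ->
  kappa S <= rho * sqrt (vol n w r S) / Rpower (dmin n w) (r / 2).
Proof.
  intros Hr Hn Hrho.
  assert (Hrho0 : 0 <= rho) by (destruct Hrho as [[lam [_ <-]] _]; apply Rabs_pos).
  set (p := Rpower (dmin n w) (r / 2)).
  assert (p0 : 0 < p) by apply exp_pos.
  assert (Hdmin : 0 < dmin n w) by (apply dmin_pos; auto; destruct Hw as [_ [_ [_ H]]]; exact H).
  assert (pp : p * p = Rpower (dmin n w) r) by (unfold p; rewrite <- Rpower_plus; f_equal; field).
  assert (Hvol : 0 <= vol n w r S) by (rewrite vol_sqnorm; apply sqnorm_nonneg).
  apply maxabs_le.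
  - apply Rmult_le_pos; [apply Rmult_le_pos; [lra|apply sqrt_pos]|left; apply Rinv_0_lt_compat, p0].
  - intros j Hj. set (g := Lap n w r (chi S) j).
    apply abs_le_of_sq.
    + apply Rmult_le_pos; [apply Rmult_le_pos; [lra|apply sqrt_pos]|left; apply Rinv_0_lt_compat, p0].
    + assert (Dj : p * p <= dr j).
      { rewrite pp. apply Rle_Rpower_l; [exact Hr|]. split; [exact Hdmin|apply dmin_le; auto]. }
      assert (Hg : dr j * g * g <= rho * rho * vol n w r S).
      { rewrite vol_sqnorm. eapply Rle_trans; [apply (sqnorm_term (Lap n w r (chi S)) j Hj)|].
        apply Lap_norm_le_spectral_radius; auto. }
      replace (rho * sqrt (vol n w r S) / p * (rho * sqrt (vol n w r S) / p))
        with (rho * rho * vol n w r S / (p * p))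
        by (rewrite <- (sqrt_sqrt (vol n w r S)) at 1 by auto; field; lra).
      apply (Rmult_le_reg_r (p * p)); [nra|].
      replace (rho * rho * vol n w r S / (p * p) * (p * p)) with (rho * rho * vol n w r S)
        by (field; lra).
      pose proof (Rmult_le_compat_l (g * g) _ _ (Rle_0_sqr g) Dj). nra.
Qed.

Lemma kappa_tau_of_tau_rho S rho tau : 0 <= r -> 0 < tau -> is_spectral_radius n w r rho ->
  (exists i, (i < n)%nat /\ S i = true) -> tau < tau_rho n w r rho S -> kappa S * tau < 1 / 2.
Proof.
  intros Hr Htau Hrho [i0 [Hi0 HS0]] Ht.
  assert (Hn : (0 < n)%nat) by lia.
  assert (Hrho0 : 0 < rho).
  { destruct Hrho as [[lam [_ E]] _]. destruct (Rle_lt_or_eq_dec 0 rho) as [H|H]; auto.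
    - rewrite <- E. apply Rabs_pos.
    - unfold tau_rho in Ht. rewrite <- H, Rinv_0, Rmult_0_l in Ht. lra. }
  set (p := Rpower (dmin n w) (r / 2)). set (vl := vol n w r S).
  assert (p0 : 0 < p) by apply exp_pos.
  assert (vl0 : 0 < vl).
  { unfold vl. rewrite vol_sqnorm. pose proof (sqnorm_term (chi S) i0 Hi0) as T.
    unfold chi at 1 2 in T. rewrite HS0 in T. pose proof (dr_pos i0). lra. }
  set (a := p / sqrt vl).
  assert (a0 : 0 < a) by (apply Rdiv_lt_0_compat; [exact p0|apply sqrt_lt_R0, vl0]).
  assert (Ea : / 2 * Rpower (dmin n w) (r / 2) * Rpower vl (- (1 / 2)) = / 2 * a).
  { unfold a. rewrite Rpower_Ropp. replace (1 / 2) with (/ 2) by field.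
    rewrite Rpower_sqrt by auto. fold p. unfold Rdiv. ring. }
  assert (Hta : tau < a / (2 * rho)).
  { unfold tau_rho in Ht. fold vl in Ht. rewrite Ea in Ht.
    pose proof (ln_1_plus_lt (/ 2 * a) ltac:(lra)).
    apply Rlt_le_trans with (/ rho * (/ 2 * a)); [|right; field; lra].
    eapply Rlt_trans; [exact Ht|]. apply Rmult_lt_compat_l; [apply Rinv_0_lt_compat|]; lra. }
  assert (Hk : kappa S <= rho / a).
  { replace (rho / a) with (rho * sqrt vl / p).
    - apply kappa_le_spectral; auto.
    - assert (0 < sqrt vl) by (apply sqrt_lt_R0, vl0).
      unfold a. field. split; apply Rgt_not_eq; lra. }
  pose proof (maxabs_nonneg n (Lap n w r (chi S))). fold (kappa S) in H.
  apply Rle_lt_trans with (rho / a * tau); [apply Rmult_le_compat_r; lra|].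
  apply Rlt_le_trans with (rho / a * (a / (2 * rho))).
  - apply Rmult_lt_compat_l; [apply Rdiv_lt_0_compat|]; lra.
  - right. field. lra.
Qed.

Lemma kappa_tau_of_tau_kappa S tau :
  (exists i, (i < n)%nat /\ Lap n w r (chi S) i <> 0) -> tau <= tau_kappa n w r S ->
  kappa S * tau <= 1 / 2.
Proof.
  intros [i0 [Hi0 Hg]] Ht.
  assert (Hk : 0 < kappa S)
    by (eapply Rlt_le_trans; [apply Rabs_pos_lt, Hg|apply maxabs_ge; auto]).
  unfold tau_kappa in Ht. fold (kappa S) in Ht.
  apply Rmult_le_compat_l with (r := kappa S) in Ht; [|lra].
  eapply Rle_trans; [exact Ht|]. right. field. lra.
Qed.

End Graph.

Theorem mainTheorem10 (n : nat) (w : nat -> nat -> R) (r : R)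
  (Hw : weighted_graph n w) (Hr : 0 <= r <= 1)
  (S : nat -> bool) (tau : R) (Htau : 0 < tau)
  (u : R -> nat -> R) (Hu : heat_solution n w r (chi S) u)
  (rho : R) (Hrho : is_spectral_radius n w r rho) :
  (((exists i, (i < n)%nat /\ S i = true) /\ tau < tau_rho n w r rho S) \/
   ((exists i, (i < n)%nat /\ Lap n w r (chi S) i <> 0) /\ tau <= tau_kappa n w r S)) ->
  forall i, (i < n)%nat -> (u tau i >= 1 / 2 <-> S i = true).
Proof.
  intros Hcase i Hi.
  apply (mbo_stationary n w r Hw S u Hu tau i Htau); [|exact Hi].
  destruct Hcase as [[HS Ht]|[HL Ht]].
  - left. apply (kappa_tau_of_tau_rho n w r Hw S rho tau); tauto.
  - apply (kappa_tau_of_tau_kappa n w r S tau HL Ht).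
Qed.
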